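(* The series $\Psi_0^+(x)=\tau([x])$ and $\Psi_0^-(x)=\tau(-[x])$ satisfy \[ \big(\beta D-S(R_+)\big)\Psi_0^+(x)=0,\qquad \big(\beta D+S(R_-)\big)\Psi_0^-(x)=0, \] where $S(R_\pm)=\sum_{k=1}^L ks_kR_\pm^k$.
   Context: Let $G(z)=1+\sum_{k=1}^Mg_kz^k$ be a polynomial, $\beta,\gamma$ formal parameters, ${\bf s}=(s_1,s_2,\dots)$ with only $s_1,\dots,s_L$ nonzero and $S(z)=\sum_{k=1}^Lks_kz^k$. For a partition $\lambda$ let $r_\lambda=\prod_{(i,j)\in\lambda}G((j-i)\beta)$ (boxes $(i,j)$, $i$ = row, $j$ = column), and $\tau({\bf t})=\sum_\lambda\gamma^{|\lambda|}r_\lambda s_\lambda({\bf t})s_\lambda(\beta^{-1}{\bf s})$, Schur functions being written in ${\bf t}=(t_1,t_2,\dots)$ with $p_i=it_i$, and $\beta^{-1}{\bf s}=(\beta^{-1}s_1,\dots)$. Here $[x]=(x,x^2/2,x^3/3,\dots)$. $D=x\,d/dx$, and $R_\pm=\gamma xG(\pm\beta D)$ acts on formal series in $x$ by $R_\pm(x^j)=\gamma G(\pm\beta j)x^{j+1}$. *)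

From HB Require Import structures.
From mathcomp Require Import all_boot all_order all_algebra.
Set Implicit Arguments. Unset Strict Implicit. Unset Printing Implicit Defensive.
Import Order.TTheory GRing.Theory Num.Theory.
Local Open Scope ring_scope.

Section Defs.
Variable K : fieldType.

Fixpoint seqs_upto (k n : nat) : seq (seq nat) :=
  match k with
  | 0 => [:: [::]]
  | k'.+1 => [::] :: [seq a :: l | a <- iota 1 n, l <- seqs_upto k' n]
  end.

Definition is_partition (n : nat) (l : seq nat) : bool :=
  [&& sorted geq l, all (fun a => 0 < a)%N l & sumn l == n].

Definition partitions (n : nat) : seq (seq nat) :=
  [seq l <- seqs_upto n n | is_partition n l].

(* t : nat -> {poly K}, with t i = t_i (t 0 is unused); p_i = i t_i.
   complete homogeneous h_k(t), defined by sum_k h_k z^k = exp(sum_i t_i z^i),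
   i.e. h_0 = 1 and k h_k = sum_{i=1}^k p_i h_{k-i}. *)
Fixpoint hseq (t : nat -> {poly K}) (k : nat) : seq {poly K} :=
  match k with
  | 0 => [:: 1]
  | k'.+1 =>
      let s := hseq t k' in
      rcons s ((k'.+1)%:R^-1 *:
                 \sum_(i < k'.+1) ((i.+1)%:R *: t i.+1) * nth 0 s (k' - i))
  end.

Definition hcomp (t : nat -> {poly K}) (m : int) : {poly K} :=
  match m with
  | Posz k => nth 0 (hseq t k) k
  | Negz _ => 0
  end.

(* Jacobi-Trudi: s_lambda(t) = det (h_{lambda_i - i + j}(t)) *)
Definition schur (t : nat -> {poly K}) (l : seq nat) : {poly K} :=
  \det (\matrix_(i < size l, j < size l)
          hcomp t ((nth 0 l i)%:Z - (i : nat)%:Z + (j : nat)%:Z)).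

(* Miwa variables [x] = (x, x^2/2, x^3/3, ...) as polynomials in x *)
Definition miwa (i : nat) : {poly K} := (i%:R)^-1 *: 'X^i.
Definition neg_miwa (i : nat) : {poly K} := - miwa i.

Definition Gfun (M : nat) (g : nat -> K) (z : K) : K :=
  1 + \sum_(1 <= k < M.+1) g k * z ^+ k.

Definition svec (L : nat) (s : nat -> K) (i : nat) : K :=
  if (0 < i <= L)%N then s i else 0.

(* beta^{-1} s as (constant) times *)
Definition tsb (beta : K) (L : nat) (s : nat -> K) (i : nat) : {poly K} :=
  (beta^-1 * svec L s i)%:P.

Definition rlam (M : nat) (g : nat -> K) (beta : K) (l : seq nat) : K :=
  \prod_(i < size l) \prod_(j < nth 0 l i)
     Gfun M g (((j : nat)%:R - (i : nat)%:R) * beta).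

(* tau(t) evaluated at t = tx, where tx is a homogeneous specialisation
   (s_lambda(tx) homogeneous of degree |lambda| in x): coefficient of x^n is
   sum over partitions of n. *)
Definition tau_at (M : nat) (g : nat -> K) (beta gamma : K) (L : nat)
  (s : nat -> K) (tx : nat -> {poly K}) (n : nat) : K :=
  \sum_(l <- partitions n)
     gamma ^+ n * rlam M g beta l * (schur tx l)`_n
       * (schur (tsb beta L s) l)`_0.

Definition Dop (f : nat -> K) (n : nat) : K := n%:R * f n.

(* R_pm = gamma x G(pm beta D) : x^j |-> gamma G(pm beta j) x^{j+1} *)
Definition Rop (M : nat) (g : nat -> K) (beta gamma : K) (sign : K)
  (f : nat -> K) (n : nat) : K :=
  match n with
  | 0 => 0
  | m.+1 => gamma * Gfun M g (sign * beta * m%:R) * f m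
  end.

Definition Sop (L : nat) (s : nat -> K) (R : (nat -> K) -> nat -> K)
  (f : nat -> K) (n : nat) : K :=
  \sum_(1 <= k < L.+1) k%:R * s k * iter k R f n.

End Defs.

(* Under the Miwa specialisation t = [x] (resp. t = -[x]) every Schur function
   s_lambda(t) vanishes unless lambda is a single row (resp. a single column),
   so Psi_0^+ = sum_n gamma^n r_(n) h_n(beta^-1 s) x^n and, since Jacobi-Trudi
   gives e_n(t) = (-1)^n h_n(-t),
   Psi_0^- = sum_n gamma^n r_(1^n) h_n(-beta^-1 s) x^n.
   On such series R_+ (resp. R_-) shifts h_n down by one index while extending
   the content product of the row (resp. column) by one box, so the equations
   reduce to Newton's identities n h_n(t) = sum_i i t_i h_(n-i)(t). *)

From mathcomp Require Import all_boot all_order all_algebra.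
From mathcomp Require Import ring zify.
Set Implicit Arguments.
Unset Strict Implicit.
Unset Printing Implicit Defensive.

Import GRing.Theory Num.Theory.
Local Open Scope ring_scope.

Section CauchyProduct.
Variable R : comNzRingType.
Implicit Types a b c p q : nat -> R.

Definition conv a b (m : nat) : R := \sum_(j < m.+1) a j * b (m - j)%N.

(* With p 0 = 0: as formal series, a = a 0 * exp (sum_(i > 0) p i z^i / i). *)
Definition newton p a := forall m : nat, m%:R * a m = conv p a m.

Lemma eq_conv a1 a2 b1 b2 : a1 =1 a2 -> b1 =1 b2 -> conv a1 b1 =1 conv a2 b2.
Proof. by move=> ea eb m; apply: eq_bigr => j _; rewrite ea eb. Qed.

Lemma eq_newton p1 p2 a : p1 =1 p2 -> newton p1 a -> newton p2 a.
Proof. by move=> ep Da m; rewrite Da; apply: eq_conv. Qed.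

Lemma coef_poly_truncM n a (P : {poly R}) k : (k <= n)%N ->
  (\poly_(i < n.+1) a i * P)`_k = \sum_(j < k.+1) a j * P`_(k - j).
Proof.
move=> le_kn; rewrite coefM; apply: eq_bigr => j _.
by rewrite coef_poly ifT //; have := ltn_ord j; lia.
Qed.

Lemma coefM_poly_trunc n (P : {poly R}) b k : (k <= n)%N ->
  (P * \poly_(i < n.+1) b i)`_k = \sum_(j < k.+1) P`_j * b (k - j)%N.
Proof.
move=> le_kn; rewrite coefM; apply: eq_bigr => j _.
by rewrite coef_poly ifT //; lia.
Qed.

Lemma coef_conv_poly n a b k : (k <= n)%N ->
  (\poly_(i < n.+1) a i * \poly_(i < n.+1) b i)`_k = conv a b k.
Proof.
move=> le_kn; rewrite coefM_poly_trunc //; apply: eq_bigr => j _.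
by rewrite coef_poly ifT //; have := ltn_ord j; lia.
Qed.

Lemma convC a b : conv a b =1 conv b a.
Proof. by move=> m; rewrite -!(coef_conv_poly _ _ (leqnn m)) mulrC. Qed.

Lemma convA a b c : conv (conv a b) c =1 conv a (conv b c).
Proof.
move=> m; pose P f := \poly_(i < m.+1) f i : {poly R}.
transitivity ((P a * P b * P c)`_m).
  rewrite coefM_poly_trunc //; apply: eq_bigr => j _.
  by rewrite coef_conv_poly // -ltnS.
rewrite -mulrA coef_poly_truncM //; apply: eq_bigr => j _.
by rewrite coef_conv_poly // leq_subr.
Qed.

Lemma conv_leibniz a b m : m%:R * conv a b m =
  conv (fun i => i%:R * a i) b m + conv a (fun i => i%:R * b i) m.
Proof.
rewrite mulr_sumr -big_split; apply: eq_bigr => j _ /=.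
have -> : m%:R = j%:R + (m - j)%:R :> R by rewrite -natrD subnKC // -ltnS.
ring.
Qed.

Lemma newton_conv p q a b : newton p a -> newton q b ->
  newton (fun i => p i + q i) (conv a b).
Proof.
move=> Da Db m; rewrite conv_leibniz.
have -> : conv (fun i => i%:R * a i) b m = conv p (conv a b) m.
  by rewrite -convA; apply: eq_conv.
have -> : conv a (fun i => i%:R * b i) m = conv q (conv a b) m.
  rewrite (eq_conv (frefl a) Db) -convA (eq_conv (convC a q) (frefl b)).
  by rewrite convA.
by rewrite -big_split; apply: eq_bigr => j _; rewrite mulrDl.
Qed.

End CauchyProduct.

Section HessenbergToeplitz.
Variable R : comNzRingType.

Lemma det_rows_proportional n (A : 'M[R]_n) (i0 i1 : 'I_n) (c : R) :
  i0 != i1 -> (forall j, A i0 j = c * A i1 j) -> \det A = 0.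
Proof.
move=> ne_i01 Ai0.
pose B := \matrix_(i, j) (if i == i0 then A i1 j else A i j).
rewrite (@determinant_multilinear _ _ A B A i0 c 0).
- rewrite (@determinant_alternate _ _ B i0 i1) ?mulr0 ?mul0r ?addr0 //.
  by move=> j; rewrite !mxE eqxx eq_sym (negbTE ne_i01).
- by apply/rowP => j; rewrite !mxE eqxx mul0r addr0 Ai0.
- by apply/matrixP => i j; rewrite !mxE eq_sym (negbTE (neq_lift _ _)).
- by [].
Qed.

(* By Cramer's rule u_n is the (n, 0) cofactor of the unitriangular Toeplitz
   matrix (h_(i-j))_(i,j<=n), whose corresponding minor is A. *)
Lemma det_hessenberg_toeplitz (h : int -> R) (u : nat -> R) n (A : 'M[R]_n) :
  h 0 = 1 -> (forall k, h (Negz k) = 0) ->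
  (forall m, conv u (fun k : nat => h k) m = (m == 0)%:R) ->
  (forall i j : 'I_n, A i j = h (1 - (i : nat)%:Z + (j : nat)%:Z)) ->
  \det A = (-1) ^+ n * u n.
Proof.
move=> h0 h_neg u_inv defA.
have h_lt0 (z : int) : z < 0 -> h z = 0 by case: z.
pose T : 'M[R]_n.+1 := \matrix_(i, j) h ((i : nat)%:Z - (j : nat)%:Z).
have detT : \det T = 1.
  rewrite det_trig; last first.
    by apply/is_trig_mxP => i j lt_ij; rewrite mxE h_lt0 // subr_lt0 ltz_nat.
  by rewrite big1 // => i _; rewrite mxE subrr.
pose e0 : 'cV[R]_n.+1 := \col_i ((i : nat) == 0%N)%:R.
have Tu : T *m \col_i u i = e0.
  apply/colP => i; rewrite !mxE -u_inv /conv.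
  rewrite (big_ord_widen _ (fun j => u j * h (i - j)%N) (ltn_ord i)).
  rewrite [RHS]big_mkcond; apply: eq_bigr => j _; rewrite !mxE.
  case: ifP => lt_ji; first by rewrite subzn 1?mulrC // -ltnS.
  by rewrite h_lt0 ?mul0r // subr_lt0 ltz_nat ltnNge -ltnS lt_ji.
have u_adj : \col_i u i = \adj T *m e0.
  by rewrite -Tu mulmxA mul_adj_mx detT mul1mx.
have := congr1 (fun v : 'cV[R]_n.+1 => v ord_max 0) u_adj.
rewrite !mxE big_ord_recl big1 => [|j _]; last by rewrite !mxE mulr0.
rewrite !mxE /= mulr1 /cofactor add0n addr0 => ->.
rewrite signrMK -det_tr; congr (\det _).
apply/matrixP => i j; rewrite !mxE defA lift0 lift_max.
by congr h; rewrite -addn1 PoszD; ring.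
Qed.

End HessenbergToeplitz.

Lemma newton_coef0 (R : comNzRingType) (p a : nat -> {poly R}) :
  newton p a -> newton (fun i => (p i)`_0) (fun i => (a i)`_0).
Proof.
move=> Da m; rewrite mulr_natl -coefMn -mulr_natl Da coef_sum.
by apply: eq_bigr => j _; rewrite coef0M.
Qed.

Section CompleteHomogeneous.
Variables (K : fieldType) (Kchar0 : [pchar K] =i pred0).
Implicit Types t : nat -> {poly K}.

Lemma natrS_neq0 n : n.+1%:R != 0 :> K.
Proof. by rewrite (pcharf0P _).1. Qed.

Lemma size_hseq t k : size (hseq t k) = k.+1.
Proof. by elim: k => [|k IH] //=; rewrite size_rcons IH. Qed.

Lemma nth_hseq t k j : (j <= k)%N -> nth 0 (hseq t k) j = hcomp t j.
Proof.
elim: k => [|k IH]; first by rewrite leqn0 => /eqP ->.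
rewrite leq_eqVlt => /orP [/eqP -> //| lt_jk].
by rewrite /= nth_rcons size_hseq lt_jk IH.
Qed.

Lemma hcompS t k : hcomp t k.+1 =
  k.+1%:R^-1 *: \sum_(i < k.+1) (i.+1%:R *: t i.+1) * hcomp t (k - i)%N.
Proof.
rewrite /hcomp /= nth_rcons size_hseq ltnn eqxx.
by congr (_ *: _); apply: eq_bigr => i _; rewrite nth_hseq ?leq_subr.
Qed.

Lemma eq_hcomp t1 t2 : t1 =1 t2 -> hcomp t1 =1 hcomp t2.
Proof.
move=> et [k|] //=; suff -> : hseq t1 k = hseq t2 k by [].
elim: k => //= k ->; congr (rcons _ (_ *: _)).
by apply: eq_bigr => i _; rewrite et.
Qed.

Lemma hcomp_newton t : newton (fun i => i%:R *: t i) (fun k : nat => hcomp t k).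
Proof.
case=> [|k]; first by rewrite /conv big_ord1 scale0r !mul0r.
rewrite /conv big_ord_recl scale0r mul0r add0r hcompS mulr_natl -scaler_nat.
rewrite scalerA mulfV ?natrS_neq0 // scale1r.
by apply: eq_bigr => i _; rewrite subSS.
Qed.

Lemma hcomp_coef0_newton t :
  newton (fun i => i%:R * (t i)`_0) (fun k : nat => (hcomp t k)`_0).
Proof.
apply: eq_newton (newton_coef0 (hcomp_newton t)) => i.
by rewrite coefZ.
Qed.

Lemma hcomp_conv_opp t m :
  conv (fun k : nat => hcomp t k) (fun k : nat => hcomp (fun i => - t i) k) m =
  (m == 0)%:R.
Proof.
case: m => [|m]; first by rewrite /conv big_ord1 mulr1.
have := newton_conv (hcomp_newton t) (hcomp_newton (fun i => - t i)) m.+1.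
rewrite [in RHS]/conv big1 => [/eqP|i _]; last by rewrite scalerN addrN mul0r.
by rewrite mulr_natl -scaler_nat scaler_eq0 (negPf (natrS_neq0 _)) => /eqP.
Qed.

Lemma hcomp_miwa (k : nat) : hcomp (@miwa K) k = 'X^k.
Proof.
elim/ltn_ind: k => -[_|k IH]; first by rewrite expr0.
rewrite hcompS (eq_bigr (fun _ => 'X^(k.+1))) => [|i _].
  by rewrite sumr_const card_ord -scaler_nat scalerA mulVf ?natrS_neq0 ?scale1r.
rewrite IH ?ltnS ?leq_subr // /miwa scalerA mulfV ?natrS_neq0 // scale1r -exprD.
by rewrite addSn subnKC // -ltnS.
Qed.

(* h(-[x]) inverts the series (x^k)_k, so it is (1, -x, 0, 0, ...). *)
Lemma hcomp_neg_miwa (k : nat) : (1 < k)%N -> hcomp (@neg_miwa K) k = 0.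
Proof.
case: k => [|[|k]] // _.
pose x (k : nat) := hcomp (@miwa K) k.
pose e (k : nat) := hcomp (fun i => - @miwa K i) k.
have conv_step m : conv x e m.+1 = e m.+1 + 'X * conv x e m.
  rewrite /conv big_ord_recl /x hcomp_miwa mul1r mulr_sumr; congr (_ + _).
  by apply: eq_bigr => i _; rewrite !hcomp_miwa exprS subSS mulrA.
by have := conv_step k.+1; rewrite !hcomp_conv_opp mulr0 addr0 => /esym.
Qed.

End CompleteHomogeneous.

Definition row_part (n : nat) : seq nat := if n is 0 then [::] else [:: n].

Lemma uniq_seqs_upto k n : uniq (seqs_upto k n).
Proof.
elim: k => [|k IH] //=; apply/andP; split.
  by apply/negP => /allpairsP [[x y] [_ _]].
apply: allpairs_uniq => //; first exact: iota_uniq.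
by move=> [x1 y1] [x2 y2] _ _ /= [-> ->].
Qed.

Lemma mem_seqs_upto k n l :
  (size l <= k)%N -> all (fun a => 0 < a <= n)%N l -> l \in seqs_upto k n.
Proof.
elim: k l => [|k IH] [|a l] //= size_l /andP [a_in l_in].
rewrite inE; apply/orP; right; apply/allpairsP; exists (a, l) => /=.
by split => //; [rewrite mem_iota add1n ltnS | apply: IH].
Qed.

Lemma uniq_partitions n : uniq (partitions n).
Proof. exact/filter_uniq/uniq_seqs_upto. Qed.

Lemma row_part_mem n : row_part n \in partitions n.
Proof.
case: n => [|n] //; rewrite mem_filter mem_seqs_upto //= ?leqnn //.
by rewrite /is_partition /= addn0 eqxx.
Qed.

Lemma col_part_mem n : nseq n 1%N \in partitions n.
Proof.
rewrite mem_filter /is_partition sumn_nseq mul1n eqxx all_nseq orbT andbT.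
have -> : sorted geq (nseq n 1%N) by case: n => //= n; elim: n => //= n ->.
by apply: mem_seqs_upto; rewrite ?size_nseq // all_nseq; case: n.
Qed.

Lemma partition_row n l : l \in partitions n -> (size l <= 1)%N ->
  l = row_part n.
Proof.
rewrite mem_filter => /andP [/and3P [_ pos_l /eqP <-] _].
by case: l pos_l => [|[|a] []] //= _ _; rewrite addn0.
Qed.

Lemma partition_col n l : l \in partitions n -> (nth 0 l 0 <= 1)%N ->
  l = nseq n 1%N.
Proof.
rewrite mem_filter => /andP [/and3P [sorted_l pos_l /eqP <-] _] le_l0_1.
suff /all_pred1P l_eq : all (pred1 1%N) l by rewrite {2}l_eq sumn_nseq mul1n.
apply/allP => x l_x; rewrite /= eqn_leq (allP pos_l) // andbT.
case: l sorted_l l_x le_l0_1 {pos_l} => // a l sorted_l.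
rewrite inE => /predU1P [-> //| l_x] /(leq_trans _); apply.
exact: (allP (order_path_min (rev_trans leq_trans) sorted_l)).
Qed.

Lemma partition_parts01 n l : l \in partitions n -> (1 < size l)%N ->
  (0 < nth 0 l 1 <= nth 0 l 0)%N.
Proof.
rewrite mem_filter => /andP [/and3P [sorted_l pos_l _] _].
by case: l sorted_l pos_l => [|a [|b l]] //= /andP [-> _] /and3P [_ -> _].
Qed.

Section SchurMiwa.
Variables (K : fieldType) (Kchar0 : [pchar K] =i pred0).
Implicit Types t : nat -> {poly K}.

Lemma schur_row t n : schur t (row_part n) = hcomp t n.
Proof.
case: n => [|n]; first by rewrite /schur det_mx00.
by rewrite /schur det_mx11 mxE /= !addn0.
Qed.

Lemma schur_col t n :
  schur t (nseq n 1%N) = (-1) ^+ n * hcomp (fun i => - t i) n.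
Proof.
rewrite /schur (det_hessenberg_toeplitz (h := hcomp t)
  (u := fun k : nat => hcomp (fun i => - t i) k)) ?size_nseq //.
  by move=> m; rewrite convC hcomp_conv_opp.
by move=> i j; rewrite mxE nth_nseq ltn_ord.
Qed.

Lemma schur_miwa_eq0 l : (1 < size l)%N -> (0 < nth 0 l 1 <= nth 0 l 0)%N ->
  schur (@miwa K) l = 0.
Proof.
move=> size_l /andP [pos_l1 le_l10].
(* Row 0 is x^(l_0 - l_1 + 1) times row 1, as h_k([x]) = x^k. *)
rewrite /schur (det_rows_proportional (i0 := Ordinal (ltnW size_l))
  (i1 := Ordinal size_l) (c := 'X^((nth 0 l 0 - nth 0 l 1)%N.+1))) // => j.
(* [schur] reads the parts with the ring zero of nat, opaque to lia. *)
rewrite !mxE; change (nth 0%R l) with (nth 0%N l).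
rewrite [X in hcomp _ X = _](_ : _ = Posz (nth 0 l 0 + j)%N);
  last by simpl; lia.
rewrite [X in _ = _ * hcomp _ X](_ : _ = Posz (nth 0 l 1 - 1 + j)%N);
  last by simpl; lia.
by rewrite !(hcomp_miwa Kchar0) -exprD; congr ('X^ _); lia.
Qed.

Lemma schur_neg_miwa_eq0 l : (1 < nth 0 l 0)%N -> schur (@neg_miwa K) l = 0.
Proof.
move=> lt1_l0; have size_l : (0 < size l)%N by case: l lt1_l0.
rewrite /schur (expand_det_row _ (Ordinal size_l)) big1 // => j _.
rewrite !mxE; change (nth 0%R l) with (nth 0%N l).
rewrite [X in hcomp _ X](_ : _ = Posz (nth 0 l 0 + j)%N); last by simpl; lia.
by rewrite (hcomp_neg_miwa Kchar0) ?mul0r //; lia.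
Qed.

End SchurMiwa.

Section MiwaSeries.
Variables (K : fieldType) (Kchar0 : [pchar K] =i pred0).
Variables (M : nat) (g : nat -> K) (beta gamma : K) (L : nat) (s : nat -> K).

Definition line_weight (sign : K) (n : nat) : K :=
  \prod_(j < n) Gfun M g (sign * beta * j%:R).

Lemma rlam_row n : rlam M g beta (row_part n) = line_weight 1 n.
Proof.
case: n => [|n]; first by rewrite /rlam /line_weight !big_ord0.
rewrite /rlam /line_weight big_ord1; apply: eq_bigr => j _.
by congr Gfun; rewrite /=; ring.
Qed.

Lemma rlam_col n : rlam M g beta (nseq n 1%N) = line_weight (-1) n.
Proof.
rewrite /rlam /line_weight size_nseq; apply: eq_bigr => i _.
rewrite nth_nseq ltn_ord big_ord1; congr Gfun.
by rewrite /=; ring.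
Qed.

Lemma tau_miwa n : tau_at M g beta gamma L s (@miwa K) n =
  gamma ^+ n * line_weight 1 n * (hcomp (tsb beta L s) n)`_0.
Proof.
rewrite /tau_at (bigD1_seq (row_part n)) ?row_part_mem ?uniq_partitions //.
rewrite big1_seq ?Monoid.mulm1 => [|l /andP [ne_l l_part]].
  by rewrite !schur_row (hcomp_miwa Kchar0) coefXn eqxx mulr1 rlam_row.
have size_l : (1 < size l)%N.
  by rewrite ltnNge; apply: contra ne_l => /(partition_row l_part) ->.
by rewrite schur_miwa_eq0 ?(partition_parts01 l_part) ?coef0 ?mulr0 ?mul0r.
Qed.

Lemma coef_signM (n i : nat) (p : {poly K}) :
  ((-1) ^+ n * p)`_i = (-1) ^+ n * p`_i.
Proof. by rewrite -(rmorph_sign (@polyC K)) coefCM. Qed.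

Lemma tau_neg_miwa n : tau_at M g beta gamma L s (@neg_miwa K) n =
  gamma ^+ n * line_weight (-1) n * (hcomp (fun i => - tsb beta L s i) n)`_0.
Proof.
rewrite /tau_at (bigD1_seq (nseq n 1%N)) ?col_part_mem ?uniq_partitions //.
rewrite big1_seq ?Monoid.mulm1 => [|l /andP [ne_l l_part]].
  have neg_neg : (fun i => - @neg_miwa K i) =1 @miwa K.
    by move=> i; rewrite opprK.
  rewrite !(schur_col Kchar0) !coef_signM (eq_hcomp neg_neg).
  by rewrite (hcomp_miwa Kchar0) coefXn eqxx mulr1 rlam_col -mulrA signrMK.
have lt1_l0 : (1 < nth 0 l 0)%N.
  by rewrite ltnNge; apply: contra ne_l => /(partition_col l_part) ->.
by rewrite (schur_neg_miwa_eq0 Kchar0) ?coef0 ?mulr0 ?mul0r.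
Qed.

Lemma iter_Rop sign (a f : nat -> K) :
  (forall m, f m = gamma ^+ m * line_weight sign m * a m) ->
  forall k n, iter k (Rop M g beta gamma sign) f n =
    if (k <= n)%N then gamma ^+ n * line_weight sign n * a (n - k)%N else 0.
Proof.
move=> def_f; elim=> [|k IH] n; first by rewrite /= def_f subn0.
case: n => [|n] //=; rewrite IH ltnS; case: ifP => _; last by rewrite mulr0.
by rewrite subSS /line_weight big_ord_recr exprS /=; ring.
Qed.

Lemma sum_svec (F : nat -> K) n :
  \sum_(1 <= k < L.+1) (if (k <= n)%N then s k * F k else 0) =
  \sum_(i < n.+1) svec L s i * F i.
Proof.
rewrite (big_ord_widen (L + n).+1 (fun i => svec L s i * F i))
  ?ltnS ?leq_addl //.
rewrite (big_nat_widenl _ 0) // (big_nat_widen _ _ (L + n).+1)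
  ?ltnS ?leq_addr //.
rewrite big_mkord big_mkcond [RHS]big_mkcond; apply: eq_bigr => i _ /=.
rewrite /svec !ltnS.
by case: (0 < i)%N; case: (i <= L)%N; case: (i <= n)%N; rewrite ?mul0r.
Qed.

Lemma line_ode sign (a f : nat -> K) : beta != 0 ->
  newton (fun i => i%:R * (sign * (beta^-1 * svec L s i))) a ->
  (forall m, f m = gamma ^+ m * line_weight sign m * a m) ->
  forall n, beta * Dop f n - sign * Sop L s (Rop M g beta gamma sign) f n = 0.
Proof.
move=> nz_beta Da def_f n; set c := gamma ^+ n * line_weight sign n.
rewrite /Sop (eq_bigr (fun k => c * if (k <= n)%N
  then s k * (k%:R * a (n - k)%N) else 0)) => [|k _]; last first.
  by rewrite (iter_Rop def_f) /c; case: ifP => _; rewrite ?mulr0 //; ring.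
rewrite -big_distrr /= sum_svec /Dop def_f -/c.
have -> : beta * (n%:R * (c * a n)) = c * (beta * (n%:R * a n)) by ring.
by rewrite Da /conv !mulr_sumr -sumrB big1 // => i _; field.
Qed.

End MiwaSeries.

Theorem theorem6p1 (K : fieldType) (Kchar0 : [pchar K] =i pred0)
  (M : nat) (g : nat -> K) (beta gamma : K) (beta_neq0 : beta != 0)
  (L : nat) (s : nat -> K) :
  let Psip := tau_at M g beta gamma L s (@miwa K) in
  let Psim := tau_at M g beta gamma L s (@neg_miwa K) in
  (forall n : nat,
     beta * Dop Psip n - Sop L s (Rop M g beta gamma 1) Psip n = 0) /\
  (forall n : nat,
     beta * Dop Psim n + Sop L s (Rop M g beta gamma (-1)) Psim n = 0).
Proof.
move=> Psip Psim; split=> n.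
- rewrite -[Sop _ _ _ _ _]mul1r.
  pose a (k : nat) := (hcomp (tsb beta L s) k)`_0.
  apply: (line_ode (a := a)) => // [|m].
    apply: eq_newton (hcomp_coef0_newton Kchar0 _) => i.
    by rewrite /tsb coefC mul1r.
  exact: tau_miwa.
- rewrite -[Sop _ _ _ _ _]opprK -[- Sop _ _ _ _ _]mulN1r.
  pose a (k : nat) := (hcomp (fun i => - tsb beta L s i) k)`_0.
  apply: (line_ode (a := a)) => // [|m].
    apply: eq_newton (hcomp_coef0_newton Kchar0 _) => i.
    by rewrite coefN /tsb coefC mulN1r.
  exact: tau_neg_miwa.
Qed.
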